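(* Consider the system $x_{k+1}=Ax_k+Bw_k$, $y^i_k=C^ix_k+D^iv^i_k$ for $i\in\mathcal V=\{1,\dots,N\}$, $k\in\mathbb Z_{\ge 0}$, with $x_0\in[\underline x_0,\overline x_0]$, $w_k\in[\underline w,\overline w]$ and $v^i_k\in[\underline v^i,\overline v^i]$ for all $k$ and $i$. Let agents communicate over a directed graph $G=(\mathcal V,E)$, and let the Distributed Interval Observer (DIO), described in the context, be run with arbitrary gains $L^i,\Gamma^i\in\mathbb R^{n\times m_i}$ ($i\in\mathcal V$) and an arbitrary number $d\in\mathbb N$ of network-update iterations. Then the DIO is a distributed interval framer for the system: for every admissible realization of $x_0$, $(w_k)$, $(v^i_k)$, every agent $i\in\mathcal V$ and every $k\ge 0$, $\underline x^i_k\le x_k\le \overline x^i_k$.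
   Context: All inequalities between vectors are entrywise; $\max$ and $\min$ of vectors are entrywise. For a matrix $M$, $M^+$ is defined entrywise by $M^+_{ij}=\max\{M_{ij},0\}$, and $M^-=M^+-M$. $A\in\mathbb R^{n\times n}$, $B\in\mathbb R^{n\times n_w}$, $C^i\in\mathbb R^{m_i\times n}$, $D^i\in\mathbb R^{m_i\times n_v^i}$, and the bounds $\underline x_0,\overline x_0,\underline w,\overline w$ are known to all agents; agent $i$ knows $\underline v^i,\overline v^i$ and observes only its own outputs $y^i_k$. For node $i$, $\mathcal N_i=\{j:(i,j)\in E\}\cup\{i\}$, and $\mathcal N_i^d$ is the set of nodes reachable from $i$ by a directed path of length at most $d$ (including $i$). DIO: set $T^i=I_n-\Gamma^iC^i$ and $\tilde A^i=T^iA-L^iC^i$. Initialize $\underline x^i_0=\underline x_0$, $\overline x^i_0=\overline x_0$ for all $i$. For each $k\ge0$, each agent $i$ computes $\underline x^{i,0}_{k+1}=(\tilde A^i)^+\underline x^i_k-(\tilde A^i)^-\overline x^i_k+(T^iB)^+\underline w-(T^iB)^-\overline w+L^iy^i_k+\Gamma^iy^i_{k+1}-((L^iD^i)^++(\Gamma^iD^i)^+)\overline v^i+((L^iD^i)^-+(\Gamma^iD^i)^-)\underline v^i$, $\overline x^{i,0}_{k+1}=(\tilde A^i)^+\overline x^i_k-(\tilde A^i)^-\underline x^i_k+(T^iB)^+\overline w-(T^iB)^-\underline w+L^iy^i_k+\Gamma^iy^i_{k+1}-((L^iD^i)^++(\Gamma^iD^i)^+)\underline v^i+((L^iD^i)^-+(\Gamma^iD^i)^-)\overline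 v^i$, and then performs $d$ rounds of network update $\underline x^{i,t}_{k+1}=\max_{j\in\mathcal N_i}\underline x^{j,t-1}_{k+1}$, $\overline x^{i,t}_{k+1}=\min_{j\in\mathcal N_i}\overline x^{j,t-1}_{k+1}$, $t=1,\dots,d$, setting $\underline x^i_{k+1}=\underline x^{i,d}_{k+1}=\max_{j\in\mathcal N_i^d}\underline x^{j,0}_{k+1}$ and $\overline x^i_{k+1}=\overline x^{i,d}_{k+1}=\min_{j\in\mathcal N_i^d}\overline x^{j,0}_{k+1}$. *)

From HB Require Import structures.
From mathcomp Require Import all_boot all_order all_algebra.
Set Implicit Arguments. Unset Strict Implicit. Unset Printing Implicit Defensive.
Import Order.TTheory GRing.Theory Num.Theory.
Local Open Scope ring_scope.

Definition lemx (R : realFieldType) p q (M1 M2 : 'M[R]_(p, q)) : Prop :=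
  forall a b, M1 a b <= M2 a b.

Definition pospart (R : realFieldType) p q (M : 'M[R]_(p, q)) : 'M[R]_(p, q) :=
  map_mx (fun a => Num.max a 0) M.
Definition negpart (R : realFieldType) p q (M : 'M[R]_(p, q)) : 'M[R]_(p, q) :=
  pospart M - M.

(* One round of network update: agent i takes the entrywise max (lower bound)
   / min (upper bound) over N_i = {j : (i,j) \in E} \cup {i}.
   Edge relation: e i j  <->  (i,j) \in E. *)
Definition net_round (R : realFieldType) (N : nat) (e : rel 'I_N) (n : nat)
  (X : 'I_N -> 'cV[R]_n * 'cV[R]_n) : 'I_N -> 'cV[R]_n * 'cV[R]_n :=
  fun i =>
    (\col_r \big[Num.max/ (X i).1 r 0]_(j | e i j) (X j).1 r 0,
     \col_r \big[Num.min/ (X i).2 r 0]_(j | e i j) (X j).2 r 0).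

(* Local (pre-network) step of agent i: from (lower, upper) bounds at time k,
   outputs y_k and y_{k+1}, produce (x^{i,0}_{k+1} lower, upper). *)
Definition local_step (R : realFieldType) (n nw m nv : nat)
  (A : 'M[R]_n) (B : 'M[R]_(n, nw)) (C : 'M[R]_(m, n)) (D : 'M[R]_(m, nv))
  (wl wu : 'cV[R]_nw) (vl vu : 'cV[R]_nv)
  (L Gam : 'M[R]_(n, m))
  (X : 'cV[R]_n * 'cV[R]_n) (yk yk1 : 'cV[R]_m) : 'cV[R]_n * 'cV[R]_n :=
  let T := 1%:M - Gam *m C in
  let At := T *m A - L *m C in
  let TB := T *m B in
  let LD := L *m D in
  let GD := Gam *m D in
  (pospart At *m X.1 - negpart At *m X.2 + pospart TB *m wl - negpart TB *m wu
     + L *m yk + Gam *m yk1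
     - (pospart LD + pospart GD) *m vu + (negpart LD + negpart GD) *m vl,
   pospart At *m X.2 - negpart At *m X.1 + pospart TB *m wu - negpart TB *m wl
     + L *m yk + Gam *m yk1
     - (pospart LD + pospart GD) *m vl + (negpart LD + negpart GD) *m vu).

(* The DIO: dio k i = (underline x^i_k, overline x^i_k). *)
Fixpoint dio (R : realFieldType) (N n nw : nat) (m nv : 'I_N -> nat)
  (e : rel 'I_N) (d : nat)
  (A : 'M[R]_n) (B : 'M[R]_(n, nw))
  (C : forall i, 'M[R]_(m i, n)) (D : forall i, 'M[R]_(m i, nv i))
  (xl0 xu0 : 'cV[R]_n) (wl wu : 'cV[R]_nw)
  (vl vu : forall i, 'cV[R]_(nv i))
  (L Gam : forall i, 'M[R]_(n, m i))
  (y : forall i, nat -> 'cV[R]_(m i)) (k : nat) : 'I_N -> 'cV[R]_n * 'cV[R]_n :=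
  match k with
  | 0 => fun _ => (xl0, xu0)
  | k'.+1 =>
      let prev := dio e d A B C D xl0 xu0 wl wu vl vu L Gam y k' in
      iter d (@net_round R N e n)
        (fun i => local_step A B (C i) (D i) wl wu (vl i) (vu i) (L i) (Gam i)
                    (prev i) (y i k') (y i k'.+1))
  end.

From HB Require Import structures.
From mathcomp Require Import all_boot all_order all_algebra.
From mathcomp Require Import lra.
Set Implicit Arguments. Unset Strict Implicit. Unset Printing Implicit Defensive.
Import Order.TTheory GRing.Theory Num.Theory.
Local Open Scope ring_scope.

(* For the local step, the
   identities Gam C x_{k+1} = Gam (y_{k+1} - D v_{k+1}) and
   L (y_k - C x_k - D v_k) = 0 put the true state in observer form
     x_{k+1} = At x_k + T B w_k + L y_k + Gam y_{k+1} - L D v_k - Gam D v_{k+1},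
   and a product M z with l <= z <= u lies between M^+ l - M^- u and
   M^+ u - M^- l because M = M^+ - M^- with M^+, M^- >= 0.  A network round
   takes the max of valid lower bounds and the min of valid upper bounds. *)

Definition frames (R : realFieldType) p q (X : 'M[R]_(p, q) * 'M[R]_(p, q))
  (x : 'M[R]_(p, q)) : Prop :=
  lemx X.1 x /\ lemx x X.2.

Definition interval_lb (R : realFieldType) p q r (M : 'M[R]_(p, q))
  (l u : 'M[R]_(q, r)) : 'M[R]_(p, r) :=
  pospart M *m l - negpart M *m u.

Definition interval_ub (R : realFieldType) p q r (M : 'M[R]_(p, q))
  (l u : 'M[R]_(q, r)) : 'M[R]_(p, r) :=
  pospart M *m u - negpart M *m l.

Section EntrywiseOrder.

Variables (R : realFieldType) (p q : nat).
Implicit Types M N : 'M[R]_(p, q).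

Lemma lemx_refl M : lemx M M.
Proof. by move=> a b. Qed.

Lemma lemxD M1 N1 M2 N2 : lemx M1 N1 -> lemx M2 N2 -> lemx (M1 + M2) (N1 + N2).
Proof. by move=> h1 h2 a b; rewrite !mxE lerD. Qed.

Lemma lemxB M1 N1 M2 N2 : lemx M1 N1 -> lemx N2 M2 -> lemx (M1 - M2) (N1 - N2).
Proof. by move=> h1 h2 a b; rewrite !mxE lerB. Qed.

End EntrywiseOrder.

Lemma ler_mul_interval (R : realFieldType) (c l z u : R) : l <= z -> z <= u ->
  Num.max c 0 * l - (Num.max c 0 - c) * u <= c * z /\
  c * z <= Num.max c 0 * u - (Num.max c 0 - c) * l.
Proof. by move=> hl hu; case: ger0P => h; split; nra. Qed.

Lemma mulmx_interval (R : realFieldType) p q r (M : 'M[R]_(p, q))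
    (l z u : 'M[R]_(q, r)) :
  frames (l, u) z -> frames (interval_lb M l u, interval_ub M l u) (M *m z).
Proof.
move=> [hl hu]; split=> a b; rewrite !mxE -sumrB; apply: ler_sum => j _;
  by rewrite !mxE; have [] := ler_mul_interval (M a j) (hl j b) (hu j b).
Qed.

Section LocalStep.

Variables (R : realFieldType) (n nw m nv : nat).
Variables (A : 'M[R]_n) (B : 'M[R]_(n, nw)) (C : 'M[R]_(m, n)) (D : 'M[R]_(m, nv)).
Variables (wl wu : 'cV[R]_nw) (vl vu : 'cV[R]_nv) (L Gam : 'M[R]_(n, m)).

Local Notation T := (1%:M - Gam *m C).
Local Notation At := (T *m A - L *m C).

Lemma local_stepE (X : 'cV[R]_n * 'cV[R]_n) (yk yk1 : 'cV[R]_m) :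
  local_step A B C D wl wu vl vu L Gam X yk yk1 =
  (interval_lb At X.1 X.2 + interval_lb (T *m B) wl wu + L *m yk + Gam *m yk1
     - (interval_ub (L *m D) vl vu + interval_ub (Gam *m D) vl vu),
   interval_ub At X.1 X.2 + interval_ub (T *m B) wl wu + L *m yk + Gam *m yk1
     - (interval_lb (L *m D) vl vu + interval_lb (Gam *m D) vl vu)).
Proof.
have regroup (V : zmodType) (a b c d e f g h i j : V) :
    a - b + c - d + e + f - (g + h) + (i + j)
    = a - b + (c - d) + e + f - ((g - i) + (h - j)).
  rewrite [in RHS](addrA (a - b)) [(g - i) + _]addrACA -opprD opprB.
  by rewrite [in RHS]addrA (addrAC _ (- (g + h))).
rewrite /local_step /interval_lb /interval_ub.
by rewrite !(mulmxDl (pospart (L *m D)) (pospart (Gam *m D)))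
  !(mulmxDl (negpart (L *m D)) (negpart (Gam *m D))); congr pair; apply: regroup.
Qed.

Lemma state_update_observer_form (x x' : 'cV[R]_n) (w : 'cV[R]_nw) (v v' : 'cV[R]_nv) :
  x' = A *m x + B *m w ->
  At *m x + (T *m B) *m w + L *m (C *m x + D *m v) + Gam *m (C *m x' + D *m v')
  = x' + ((L *m D) *m v + (Gam *m D) *m v').
Proof.
move=> Ex.
rewrite (mulmxBl (T *m A)) (addrAC _ (- _)) -!mulmxA -mulmxDr -Ex.
by rewrite mulmxBl mul1mx -mulmxA !mulmxDr subrKA (addrAC x') subrKA addrA.
Qed.

Lemma local_step_frames (X : 'cV[R]_n * 'cV[R]_n) (x x' : 'cV[R]_n)
    (w : 'cV[R]_nw) (v v' : 'cV[R]_nv) :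
  frames X x -> frames (wl, wu) w -> frames (vl, vu) v -> frames (vl, vu) v' ->
  x' = A *m x + B *m w ->
  frames (local_step A B C D wl wu vl vu L Gam X (C *m x + D *m v) (C *m x' + D *m v')) x'.
Proof.
case: X => Xl Xu hX hw hv hv' Ex.
have [AtL AtU] := mulmx_interval At hX.
have [TBL TBU] := mulmx_interval (T *m B) hw.
have [LDL LDU] := mulmx_interval (L *m D) hv.
have [GDL GDU] := mulmx_interval (Gam *m D) hv'.
have Ex' : x' = At *m x + (T *m B) *m w + L *m (C *m x + D *m v)
               + Gam *m (C *m x' + D *m v') - ((L *m D) *m v + (Gam *m D) *m v').
  by rewrite state_update_observer_form // addrK.
rewrite local_stepE [X in frames _ X]Ex'; split.
- apply: lemxB (lemxD LDU GDU).
  by apply: lemxD (lemx_refl _); apply: lemxD (lemx_refl _); apply: lemxD.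
- apply: lemxB (lemxD LDL GDL).
  by apply: lemxD (lemx_refl _); apply: lemxD (lemx_refl _); apply: lemxD.
Qed.

End LocalStep.

Lemma net_round_frames (R : realFieldType) (N : nat) (e : rel 'I_N) (n : nat)
    (X : 'I_N -> 'cV[R]_n * 'cV[R]_n) (x : 'cV[R]_n) :
  (forall j, frames (X j) x) -> forall j, frames (net_round e X j) x.
Proof.
move=> hX j; split=> a b; rewrite !mxE ord1.
- by apply: bigmax_le => [|k _]; [case: (hX j) | case: (hX k)].
- by apply: le_bigmin => [|k _]; [case: (hX j) | case: (hX k)].
Qed.

Lemma iter_net_round_frames (R : realFieldType) (N : nat) (e : rel 'I_N) (n d : nat)
    (X : 'I_N -> 'cV[R]_n * 'cV[R]_n) (x : 'cV[R]_n) :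
  (forall j, frames (X j) x) -> forall j, frames (iter d (@net_round R N e n) X j) x.
Proof. by move=> hX; elim: d => [|d IHd] //=; apply: net_round_frames. Qed.

Theorem lemma1 (R : realFieldType) (N n nw : nat) (m nv : 'I_N -> nat)
  (e : rel 'I_N) (d : nat)
  (A : 'M[R]_n) (B : 'M[R]_(n, nw))
  (C : forall i, 'M[R]_(m i, n)) (D : forall i, 'M[R]_(m i, nv i))
  (xl0 xu0 : 'cV[R]_n) (wl wu : 'cV[R]_nw)
  (vl vu : forall i, 'cV[R]_(nv i))
  (L Gam : forall i, 'M[R]_(n, m i))
  (x : nat -> 'cV[R]_n) (w : nat -> 'cV[R]_nw) (v : forall i, nat -> 'cV[R]_(nv i)) :
  (forall k, x k.+1 = A *m x k + B *m w k) ->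
  lemx xl0 (x 0%N) -> lemx (x 0%N) xu0 ->
  (forall k, lemx wl (w k) /\ lemx (w k) wu) ->
  (forall i k, lemx (vl i) (v i k) /\ lemx (v i k) (vu i)) ->
  let y := fun i k => C i *m x k + D i *m v i k in
  forall (i : 'I_N) (k : nat),
    lemx (dio e d A B C D xl0 xu0 wl wu vl vu L Gam y k i).1 (x k) /\
    lemx (x k) (dio e d A B C D xl0 xu0 wl wu vl vu L Gam y k i).2.
Proof.
move=> Ex hx0l hx0u hw hv y i k; elim: k i => [|k IHk] i; first by split.
apply: iter_net_round_frames => j.
exact: local_step_frames (IHk j) (hw k) (hv j k) (hv j k.+1) (Ex k).
Qed.
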